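(* Let $(X,\mathcal{A})$ be a cross resolvable design with $r$ parallel classes and $b_r$ blocks per parallel class, and let $z\in\{2,\dots,r\}$ be such that $\mu_z$ exists. In the multi-access coded caching scheme described in the context, with distinct demands, at the end of all transmissions of the delivery phase every user $m$ can recover all subfiles of its demanded file $W_{d_m}$ (using the transmissions and the contents of the caches it is connected to).
   Context: A resolvable design $(X,\mathcal{A})$: $X$ a finite set of $v$ points, $\mathcal{A}$ a collection of $b$ blocks each of size $k$, partitioned into $r$ parallel classes, each being a set of $b_r=v/k$ pairwise disjoint blocks with union $X$. $\mu_z$ exists if $|B_1\cap\cdots\cap B_z|$ equals the same nonzero value $\mu_z$ for every choice of blocks from $z$ distinct parallel classes. Users: one user $U_H$ for each set $H$ of $z$ blocks from $z$ distinct parallel classes, connected to the caches of those blocks (one cache per block). Placement: each file $W_i$ ($i\in[N]$) is split into subfiles $W_{i,x}$, $x\in X$; the cache of block $A_j$ stores $W_{i,x}$ for $x\in A_j$ and all $i$. Delivery: user $m$ demands $W_{d_m}$. For each choice of $z$ parallel classes $\mathcal{P}_1,\dots,\mathcal{P}_z$ and each choice of a pair of distinct blocks $\{C_{s,i_s},C_{s,j_s}\}\subseteq\mathcal{P}_s$ for every $s\in[z]$, let $\mathcal{X}$ be the $2^z$ users whose caches consist of one block from each chosen pair; for $m\in\mathcal{X}$ connected to $C_{1,a_1},\dots,C_{z,a_z}$, with $e_s$ the other index of $\{i_s,j_s\}$, put $f_m=C_{1,e_1}\cap\cdots\cap C_{z,e_z}=\{y_{m,1},\dots,y_{m,\mu_z}\}$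 (fixed ordering), and broadcast $\bigoplus_{m\in\mathcal{X}}W_{d_m,y_{m,s}}$ for each $s\in[\mu_z]$. *)

From HB Require Import structures.
From mathcomp Require Import all_boot all_order all_algebra.
Set Implicit Arguments. Unset Strict Implicit. Unset Printing Implicit Defensive.
Import GRing.Theory.

(* A block is indexed by (parallel class, position in class). *)
Definition blk (r br : nat) := ('I_r * 'I_br)%type.

Definition resolvable (X : finType) (r br k : nat) (B : 'I_r -> 'I_br -> {set X}) : Prop :=
  [/\ 0 < k,
      (forall i j, #|B i j| = k),
      (forall i j j', j != j' -> [disjoint B i j & B i j']) &
      (forall i, \bigcup_(j < br) B i j = [set: X])].

Definition mu_exists (X : finType) (r br : nat) (B : 'I_r -> 'I_br -> {set X})
  (z mu : nat) : Prop :=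
  0 < mu /\ forall (S : {set 'I_r}) (f : 'I_r -> 'I_br),
    #|S| = z -> #|\bigcap_(i in S) B i (f i)| = mu.

Definition classes (r br : nat) (H : {set blk r br}) : {set 'I_r} := [set p.1 | p in H].

Definition is_user (r br z : nat) (H : {set blk r br}) : bool :=
  (#|H| == z) && (#|classes H| == z).

Definition is_group (r br z : nat) (Q : {set blk r br}) : bool :=
  (#|classes Q| == z) &&
  [forall i in classes Q, #|[set p in Q | p.1 == i]| == 2].

Definition users_of (r br z : nat) (Q : {set blk r br}) : {set {set blk r br}} :=
  [set m | is_user z m & m \subset Q].

(* points whose subfiles are in the caches connected to user H *)
Definition cached (X : finType) (r br : nat) (B : 'I_r -> 'I_br -> {set X})
  (H : {set blk r br}) : {set X} := \bigcup_(p in H) B p.1 p.2.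

Definition fset_of (X : finType) (r br : nat) (B : 'I_r -> 'I_br -> {set X})
  (Q m : {set blk r br}) : {set X} := \bigcap_(p in Q :\: m) B p.1 p.2.

(* the s-th transmission of group Q: XOR (sum over F_2) of W_{d_m, y_{m,s}} *)
Definition transmission (X : finType) (r br z N F mu : nat)
  (W : 'I_N -> X -> 'rV['F_2]_F) (d : {set blk r br} -> 'I_N)
  (y : {set blk r br} -> {set blk r br} -> 'I_mu -> X)
  (Q : {set blk r br}) (s : 'I_mu) : 'rV['F_2]_F :=
  \sum_(m in users_of z Q) W (d m) (y Q m s).

From HB Require Import structures.
From mathcomp Require Import all_boot all_order all_algebra.
Import GRing.Theory.

(* If user H does not cache the point x, then in each parallel class of H the
   point x lies in a unique block, different from the block of H in that class.
   Adding these blocks to H yields a delivery group Q with x in f_H, so some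
   transmission of Q is W_{d_H, x} plus terms W_{d_m, y} with y in f_m for the
   other users m of Q.  Such an m misses some block of H, which is then one of
   the blocks intersected in f_m, so every y in f_m is cached by H and all the
   other terms are known.  Neither the value of mu_z nor the distinctness of the
   demands is needed. *)

Section Delivery.

Set Implicit Arguments.
Unset Strict Implicit.

Lemma eq_summand_of_eq_sum (V : zmodType) (I : finType) (A : {pred I})
    (f g : I -> V) (a : I) :
  (\sum_(i in A) f i = \sum_(i in A) g i)%R -> a \in A ->
  (forall i, i \in A -> i != a -> f i = g i) -> f a = g a.
Proof.
move=> eq_sum aA eq_others; move: eq_sum.
rewrite (bigD1 a aA) (bigD1 a aA) /= (eq_bigr g) => [/addIr //|i /andP[]].
exact: eq_others.
Qed.

Variables (X : finType) (r br z : nat) (B : 'I_r -> 'I_br -> {set X}).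

Lemma user_classes_inj (H : {set blk r br}) :
  is_user z H -> {in H &, injective (fun p : blk r br => p.1)}.
Proof.
case/andP=> /eqP cardH /eqP cardC.
by apply/imset_injP; rewrite -/(classes H) cardC cardH.
Qed.

Lemma user_not_subset (H m : {set blk r br}) :
  is_user z H -> is_user z m -> m != H -> ~~ (H \subset m).
Proof.
case/andP=> /eqP cardH _ /andP[/eqP cardm _] neq_mH.
by apply: contra neq_mH => sub_Hm; rewrite eq_sym eqEcard sub_Hm cardH cardm /=.
Qed.

Lemma fset_of_sub_cached (Q H m : {set blk r br}) :
  H \subset Q -> ~~ (H \subset m) -> fset_of B Q m \subset cached B H.
Proof.
move=> sub_HQ /subsetPn[p pH pNm]; apply/subsetP => x /bigcapP/(_ p) xp.
apply/bigcupP; exists p => //; apply: xp.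
by rewrite inE pNm (subsetP sub_HQ).
Qed.

Hypothesis B_disjoint : forall i j j', j != j' -> [disjoint B i j & B i j'].
Hypothesis B_cover : forall i, \bigcup_(j < br) B i j = [set: X].

Lemma block_exists (x : X) (i : 'I_r) : exists j, x \in B i j.
Proof.
have /bigcupP[j _ xj] : x \in \bigcup_(j < br) B i j by rewrite B_cover inE.
by exists j.
Qed.

Lemma block_unique (x : X) (i : 'I_r) (j j' : 'I_br) :
  x \in B i j -> x \in B i j' -> j = j'.
Proof.
move=> xj xj'; case: (eqVneq j j') => // /(B_disjoint i) dis.
by rewrite (disjointFr dis xj) in xj'.
Qed.

Definition completion (H : {set blk r br}) (x : X) : {set blk r br} :=
  H :|: [set p | (p.1 \in classes H) && (x \in B p.1 p.2)].

Lemma classes_completion H x : classes (completion H x) = classes H.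
Proof.
rewrite /classes imsetU; apply/setUidPl/subsetP => i /imsetP[p].
by rewrite inE => /andP[iH _] ->.
Qed.

Lemma completion_pair H x (a : blk r br) (j : 'I_br) :
  is_user z H -> a \in H -> x \in B a.1 j ->
  [set p in completion H x | p.1 == a.1] = [set a; (a.1, j)].
Proof.
case: a => i0 j0 /= uH aH xj; apply/setP => -[i l]; rewrite !inE /=.
apply/idP/idP => [/andP[/orP[pH | /andP[_ xl]] /eqP ei]|].
- by rewrite (user_classes_inj uH pH aH ei) eqxx.
- by rewrite ei in xl *; rewrite (block_unique xl xj) eqxx orbT.
case/orP=> /andP[/eqP/= -> /eqP/= ->]; rewrite ?aH ?xj eqxx ?orbT //=.
by rewrite !andbT; apply/orP; right; apply/imsetP; exists (i0, j0).
Qed.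

Lemma completion_group H x :
  is_user z H -> x \notin cached B H -> is_group z (completion H x).
Proof.
move=> uH xNH; have /andP[_ /eqP cardC] := uH.
rewrite /is_group classes_completion cardC eqxx /=.
apply/forall_inP => _ /imsetP[a aH ->]; have [j xj] := block_exists x a.1.
rewrite (completion_pair uH aH xj) cards2; case: (eqVneq a (a.1, j)) => // eq_a.
have xa : x \in B a.1 a.2 by rewrite {2}eq_a.
by case/negP: xNH; apply/bigcupP; exists a.
Qed.

Lemma user_of_completion H x :
  is_user z H -> H \in users_of z (completion H x).
Proof. by move=> uH; rewrite inE uH subsetUl. Qed.

Lemma mem_fset_of_completion H x : x \in fset_of B (completion H x) H.
Proof.
apply/bigcapP => p; rewrite !inE => /andP[pNH /orP[pH | /andP[_ //]]].
by rewrite pH in pNH.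
Qed.

End Delivery.

Theorem lemma8 (X : finType) (r br k z mu N F : nat)
  (B : 'I_r -> 'I_br -> {set X})
  (d : {set blk r br} -> 'I_N)
  (y : {set blk r br} -> {set blk r br} -> 'I_mu -> X) :
  @resolvable X r br k B ->
  (2 <= z <= r) ->
  @mu_exists X r br B z mu ->
  {in [pred H | is_user z H] &, injective d} ->
  (forall Q m, is_group z Q -> m \in users_of z Q ->
     [set y Q m s | s : 'I_mu] = fset_of B Q m) ->
  forall H : {set blk r br}, is_user z H ->
  forall W W' : 'I_N -> X -> 'rV['F_2]_F,
    (forall n x, x \in cached B H -> W n x = W' n x) ->
    (forall Q s, is_group z Q ->
       transmission z W d y Q s = transmission z W' d y Q s) ->
    forall x, W (d H) x = W' (d H) x.
Proof.
move=> [_ _ B_disjoint B_cover] _ _ _ y_enum H uH W W' W_cached W_trans x.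
have [/W_cached // | xNH] := boolP (x \in cached B H).
set Q := completion B H x.
have gQ : is_group z Q by exact: completion_group.
have HQ : H \in users_of z Q by exact: user_of_completion.
have : x \in fset_of B Q H by exact: mem_fset_of_completion.
rewrite -y_enum // => /imsetP[s _ ->].
apply: (eq_summand_of_eq_sum (W_trans Q s gQ) HQ) => m mQ neq_mH.
have um : is_user z m by move: mQ; rewrite inE => /andP[].
have sub_HQ : H \subset Q by exact: subsetUl.
apply/W_cached/(subsetP (fset_of_sub_cached B sub_HQ (user_not_subset uH um neq_mH))).
by rewrite -y_enum // imset_f.
Qed.
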